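(* Let $\Delta$ be a pure $d$-dimensional simplicial complex that is acyclic in positive codimension (APC), and fix $0\le i<d$. Let $\Upsilon$ be an $i$-dimensional spanning tree of $\Delta$, let $\Theta=\Delta_i\setminus\Upsilon_i$ be the set of $i$-dimensional faces of $\Delta$ not in $\Upsilon$, and let $\tilde L$ be the reduced Laplacian, i.e. the square submatrix of $L_{\Delta,i}$ with rows and columns indexed by $\Theta$. Suppose that $\tilde H_{i-1}(\Upsilon;\mathbb{Z})=0$. Then $$K_i(\Delta)\cong \mathbb{Z}^{\Theta}/\operatorname{im}\tilde L.$$
   Context: For a finite simplicial complex $\Delta$, $\Delta_i$ denotes its set of $i$-dimensional faces, $\Delta_{(i)}$ its $i$-skeleton (all faces of dimension $\le i$), and $f_i(\Delta)=|\Delta_i|$. $C_i(\Delta;\mathbb{Z})$ is the free abelian group with basis $\Delta_i$ (each face given a fixed orientation; $C_{-1}=\mathbb{Z}$ is spanned by the empty face), $\partial_i=\partial_{\Delta,i}:C_i(\Delta;\mathbb{Z})\to C_{i-1}(\Delta;\mathbb{Z})$ is the simplicial boundary map, and $\partial^*_i:C_{i-1}(\Delta;\mathbb{Z})\to C_i(\Delta;\mathbb{Z})$ is the coboundary map, i.e. the transpose of $\partial_i$ with respect to the standard bases. The ($i$-dimensional, up-down) combinatorial Laplacian is $L_{\Delta,i}=\partial_{i+1}\partial^*_{i+1}:C_i(\Delta;\mathbb{Z})\to C_i(\Delta;\mathbb{Z})$. The $i$-dimensional critical group is $K_i(\Delta)=\ker\partial_i/\operatorname{im}(\partial_{i+1}\partial^*_{i+1})$.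 $\tilde H_i$ denotes reduced simplicial homology and $\beta_i(\Delta)=\dim_{\mathbb{Q}}\tilde H_i(\Delta;\mathbb{Q})$. A complex is pure if all maximal faces have the same dimension; a pure $d$-dimensional complex is APC if $\tilde H_j(\Delta;\mathbb{Q})=0$ for all $j<d$. If $\Gamma$ is a pure $k$-dimensional complex, a subcomplex $\Upsilon\subseteq\Gamma$ with $\Upsilon_{(k-1)}=\Gamma_{(k-1)}$ is a (simplicial) spanning tree of $\Gamma$ if (1) $\tilde H_k(\Upsilon;\mathbb{Z})=0$, (2) $\tilde H_{k-1}(\Upsilon;\mathbb{Q})=0$, and (3) $f_k(\Upsilon)=f_k(\Gamma)-\beta_k(\Gamma)+\beta_{k-1}(\Gamma)$. An $i$-dimensional spanning tree of $\Delta$ is a spanning tree of the skeleton $\Delta_{(i)}$. Chains supported on $\Upsilon$ or on $\Theta$ are regarded as elements of $C_i(\Delta;\mathbb{Z})$; $C_i(\Theta;\mathbb{Z})$ denotes the span of the faces in $\Theta$, identified with $\mathbb{Z}^\Theta$. *)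

From HB Require Import structures.
From mathcomp Require Import all_boot all_order all_algebra.
Set Implicit Arguments. Unset Strict Implicit. Unset Printing Implicit Defensive.
Import Order.TTheory GRing.Theory Num.Theory.
Local Open Scope ring_scope.

(* A face of dimension j has j+1 vertices; we
   index faces by their SIZE k = j+1, so that k = 0 is the empty face
   (the (-1)-dimensional face spanning C_{-1} = Z). *)

Definition is_complex (V : finType) (D : {set {set V}}) : Prop :=
  set0 \in D /\ (forall s t : {set V}, s \in D -> t \subset s -> t \in D).

Definition faces (V : finType) (D : {set {set V}}) (k : nat) : {set {set V}} :=
  [set s in D | #|s| == k].

(* k-skeleton by size: all faces with at most k vertices,
   i.e. the (k-1)-skeleton Delta_(k-1). *)
Definition skel (V : finType) (D : {set {set V}}) (k : nat) : {set {set V}} :=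
  [set s in D | #|s| <= k]%N.

Definition pure (V : finType) (D : {set {set V}}) (d : nat) : Prop :=
  (forall s, s \in D -> (#|s| <= d.+1)%N) /\
  (forall s, s \in D -> exists2 t, t \in D & (s \subset t) && (#|t| == d.+1)).

(* Fixed orientation: each face is oriented by the increasing order of its
   vertices w.r.t. enum_rank.  Incidence number [s : t] of the boundary
   map: (-1)^j if t is s with its j-th vertex (0-based) removed, else 0. *)
Definition bcoef (V : finType) (s t : {set V}) : int :=
  \sum_(v in s | t == s :\ v)
     (-1) ^+ #|[set u in s | (enum_rank u < enum_rank v)%N]|.

Definition chain (R : pzRingType) (V : finType) := {ffun {set V} -> R}.

Definition supp_on (R : pzRingType) (V : finType) (S : {set {set V}})
  (c : chain R V) : Prop := forall s, s \notin S -> c s = 0.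

(* boundary map from faces of size k to faces of size k-1
   (this is \partial_{k-1}; for k = 0 it is the zero map) *)
Definition bd (R : pzRingType) (V : finType) (D : {set {set V}}) (k : nat)
  (c : chain R V) : chain R V :=
  [ffun t => if t \in faces D k.-1 then
               \sum_(s in faces D k) (bcoef s t)%:~R * c s else 0].

Definition cobd (R : pzRingType) (V : finType) (D : {set {set V}}) (k : nat)
  (c : chain R V) : chain R V :=
  [ffun s => if s \in faces D k then
               \sum_(t in faces D k.-1) (bcoef s t)%:~R * c t else 0].

(* up-down Laplacian on faces of size k:  L_{D,k-1} = bd_{k+1} cobd_{k+1} *)
Definition lap (R : pzRingType) (V : finType) (D : {set {set V}}) (k : nat)
  (c : chain R V) : chain R V := bd D k.+1 (cobd D k.+1 c).

(* vanishing reduced homology with coefficients in R in dimension k-1: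
   every (k-1)-cycle is a boundary. *)
Definition acyc (R : pzRingType) (V : finType) (D : {set {set V}}) (k : nat)
  : Prop :=
  forall c : chain R V, supp_on (faces D k) c -> bd D k c = 0 ->
    exists2 b : chain R V, supp_on (faces D k.+1) b & bd D k.+1 b = c.

(* rational reduced Betti number beta_{k-1}(D) = dim_Q H~_{k-1}(D;Q),
   computed as dim(Z_{k-1}) - dim(B_{k-1}) in the Q-vector space of
   rational chains. *)
Definition chainQ (V : finType) := {ffun {set V} -> rat^o}.

Definition chainsp (V : finType) (S : {set {set V}}) : {vspace chainQ V} :=
  (\sum_(s in S) <[ [ffun t => if t == s then (1 : rat^o) else 0%R] ]>)%VS.

Definition betti (V : finType) (D : {set {set V}}) (k : nat) : nat :=
  (\dim (chainsp (faces D k) :&: lker (linfun (bd (R := rat^o) D k)))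
   - \dim (linfun (bd (R := rat^o) D k.+1) @: chainsp (faces D k.+1)))%N.

(* spanning tree of dimension k-1 (faces of size k) of the complex G
   (G is pure of dimension k-1 in the intended use) *)
Definition spanning_tree (V : finType) (G U : {set {set V}}) (k : nat) : Prop :=
  [/\ is_complex U /\ U \subset G, skel U k.-1 = skel G k.-1,
      acyc int U k,                        (* H~_{k-1}(U;Z) = 0 *)
      acyc rat U k.-1 &                    (* H~_{k-2}(U;Q) = 0 *)
      (#|faces U k|%:Z = #|faces G k|%:Z - (betti G k)%:Z
                           + (betti G k.-1)%:Z)].

Definition restr (R : pzRingType) (V : finType) (S : {set {set V}})
  (c : chain R V) : chain R V := [ffun s => if s \in S then c s else 0].

(* A/B ≅ C/D for subgroups B ⊆ A of M and D ⊆ C of N, where C is a free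
   abelian group (here C = Z^Theta): witnessed by an additive map f : C -> A
   whose induced map C/D -> A/B is well defined, injective and surjective.
   (Since C is free, any isomorphism C/D -> A/B lifts to such an f, so this
   is equivalent to the existence of an abstract isomorphism.) *)
Definition quot_iso (M N : zmodType) (A B : M -> Prop) (C D : N -> Prop)
  : Prop :=
  exists f : N -> M,
    [/\ forall x y, C x -> C y -> f (x - y) = f x - f y,
        forall y, C y -> A (f y),
        forall y, C y -> (B (f y) <-> D y) &
        forall x, A x -> exists2 y, C y & B (x - f y)].

From HB Require Import structures.
From mathcomp Require Import all_boot all_order all_algebra.
Import Order.TTheory GRing.Theory Num.Theory.
Local Open Scope ring_scope.
Set Implicit Arguments. Unset Strict Implicit. Unset Printing Implicit Defensive.

(* Write C_i for the i-chains and Z_i = ker d_i; the tree Ups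
   has the i-faces Ups_i inside Delta_i, with complement Theta.  Every
   y in Z^Theta extends uniquely to a cycle z in Z_i(Delta) agreeing with y on
   Theta: existence because d y is a cycle of Ups, hence (H~_{i-1}(Ups;Z) = 0)
   the boundary of some w on Ups_i, so z = y - w works; uniqueness because
   d is injective on C_i(Ups) (H~_i(Ups;Z) = 0 and Ups has no (i+1)-faces).
   The extension map E : Z^Theta -> Z_i(Delta) is additive and surjective
   (E (x|Theta) = x), and E y lies in im L iff y lies in im L~.  The only
   non-formal point is the direction "E y = L b  ==>  y in im L~": we must
   replace b by a chain on Theta with the same Laplacian, i.e. subtract a
   coboundary d^* a agreeing with b on Ups_i.  This needs the coboundary
   d^*_Ups to be onto C_i(Ups): d_Ups is injective with saturated image
   (its image is the kernel of the next boundary map), so by Smith normal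
   form it has a left inverse over Z, whose transpose inverts d^*_Ups. *)

Section BoundarySquaresToZero.
Variable V : finType.

Definition sgn (s : {set V}) (v : V) : int :=
  (-1) ^+ #|[set u in s | (enum_rank u < enum_rank v)%N]|.

Lemma sgn_swap (s : {set V}) v w : v \in s -> w \in s -> v != w ->
  sgn s v * sgn (s :\ v) w = - (sgn s w * sgn (s :\ w) v).
Proof.
wlog lt_vw : v w / (enum_rank v < enum_rank w)%N.
  move=> IH vs ws nvw.
  have [lt|] := ltnP (enum_rank v) (enum_rank w); first exact: IH.
  rewrite leq_eqVlt => /orP[/eqP/val_inj/enum_rank_inj wv|lt_wv].
    by rewrite wv eqxx in nvw.
  by rewrite (IH w v lt_wv ws vs) ?opprK // eq_sym.
move=> vs ws _; rewrite /sgn.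
set Av := [set u in s | _ < enum_rank v]%N.
set Aw := [set u in s | _ < enum_rank w]%N.
have -> : [set u in s :\ v | (enum_rank u < enum_rank w)%N] = Aw :\ v.
  by apply/setP => u; rewrite !inE andbA.
have -> : [set u in s :\ w | (enum_rank u < enum_rank v)%N] = Av.
  apply/setP => u; rewrite !inE; case: eqP => //= ->.
  by rewrite ltnNge (ltnW lt_vw) andbF.
have vAw : v \in Aw by rewrite inE vs lt_vw.
rewrite (cardsD1 v Aw) vAw add1n exprS mulN1r mulNr opprK mulrC.
by [].
Qed.

(* The incidence numbers of the faces s\v and t cancel in pairs:
   this is the combinatorial heart of d d = 0. *)
Lemma bcoef_cancel (s t : {set V}) :
  \sum_(v in s) sgn s v * bcoef (s :\ v) t = 0.
Proof.
pose g v w := if (v \in s) && (w \in s :\ v) && (t == s :\ v :\ w)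
              then sgn s v * sgn (s :\ v) w else 0.
have -> : \sum_(v in s) sgn s v * bcoef (s :\ v) t = \sum_v \sum_w g v w.
  rewrite [RHS](bigID (mem s)) /= [X in _ + X]big1 ?addr0; last first.
    by move=> v /negbTE vs; apply: big1 => w _; rewrite /g vs.
  apply: eq_bigr => v vs; rewrite /bcoef big_distrr /= big_mkcond /=.
  by apply: eq_bigr => w _; rewrite /g vs.
have g_anti v w : g w v = - g v w.
  rewrite /g !inE [s :\ w :\ v]setDDl setUC -setDDl.
  case vs : (v \in s); case ws : (w \in s); rewrite /= ?andbF ?oppr0 //.
  case: (eqVneq w v) => [->|nwv] /=; rewrite ?andbF ?oppr0 //.
  by case: (t == _); rewrite ?oppr0 // (sgn_swap ws vs nwv).
set S := \sum_v _.
have S2 : S *+ 2 = 0.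
  rewrite mulr2n {2}/S exchange_big /= /S -big_split /= big1 // => v _.
  by rewrite -big_split big1 // => w _; rewrite /= (g_anti v w) addrN.
by apply/eqP; move/eqP: S2; rewrite mulrn_eq0.
Qed.

Lemma sum_facets (D : {set {set V}}) k s (g : {set V} -> int) :
  is_complex D -> s \in D -> #|s| = k.+1 ->
  \sum_(u in faces D k) bcoef s u * g u = \sum_(v in s) sgn s v * g (s :\ v).
Proof.
move=> [_ closedD] sD cs; rewrite /bcoef.
under eq_bigr => u _ do rewrite big_distrl /= big_mkcond /=.
rewrite exchange_big /= [RHS]big_mkcond /=; apply: eq_bigr => v _.
case vs: (v \in s) => /=; last by rewrite big1.
rewrite -big_mkcondr /= (big_pred1 (s :\ v)) // => u /=; rewrite /faces inE.
case: (eqVneq u (s :\ v)) => [->|_]; last by rewrite andbF.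
rewrite (closedD s) ?subsetDl //=.
by have := cardsD1 v s; rewrite vs cs add1n => -[<-]; rewrite eqxx.
Qed.

Lemma bdK (D : {set {set V}}) k (c : chain int V) :
  is_complex D -> bd D k (bd D k.+1 c) = 0.
Proof.
move=> cD; apply/ffunP => t; rewrite !ffunE; case: ifP => // _.
under eq_bigr => u uD do rewrite ffunE /= uD intz big_distrr /=.
rewrite exchange_big /= big1 // => s; rewrite inE => /andP[sD /eqP cs].
under eq_bigr => u _ do rewrite intz mulrCA mulrA.
by rewrite -big_distrl /= (sum_facets (fun u => bcoef u t) cD sD cs) bcoef_cancel mul0r.
Qed.

Lemma cobdK (D : {set {set V}}) k (a : chain int V) :
  is_complex D -> cobd D k.+1 (cobd D k a) = 0.
Proof.
move=> cD; apply/ffunP => s; rewrite !ffunE; case: ifP => //.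
rewrite inE => /andP[sD /eqP cs].
under eq_bigr => u uD do rewrite ffunE /= uD intz big_distrr /=.
rewrite exchange_big /= big1 // => t _.
under eq_bigr => u _ do rewrite intz mulrA.
by rewrite -big_distrl /= (sum_facets (fun u => bcoef u t) cD sD cs) bcoef_cancel mul0r.
Qed.

End BoundarySquaresToZero.

Section ChainMaps.
Variables (V : finType) (D : {set {set V}}) (k : nat).
Implicit Types (x y c : chain int V).

Lemma chainB x y s : (x - y) s = x s - y s.
Proof. by rewrite !ffunE. Qed.

Lemma bdB x y : bd D k (x - y) = bd D k x - bd D k y.
Proof.
apply/ffunP => t; rewrite !ffunE; case: ifP => _; rewrite ?subr0 //.
by rewrite -sumrB; apply: eq_bigr => s _; rewrite !ffunE mulrBr.
Qed.

Lemma cobdB x y : cobd D k (x - y) = cobd D k x - cobd D k y.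
Proof.
apply/ffunP => t; rewrite !ffunE; case: ifP => _; rewrite ?subr0 //.
by rewrite -sumrB; apply: eq_bigr => s _; rewrite !ffunE mulrBr.
Qed.

Lemma bd0 : bd D k (0 : chain int V) = 0.
Proof.
apply/ffunP => t; rewrite !ffunE; case: ifP => // _.
by rewrite big1 // => s _; rewrite ffunE mulr0.
Qed.

Lemma bd_supp c : supp_on (faces D k.-1) (bd D k c).
Proof. by move=> t tn; rewrite ffunE (negbTE tn). Qed.

Lemma cobd_supp c : supp_on (faces D k) (cobd D k c).
Proof. by move=> t tn; rewrite ffunE (negbTE tn). Qed.

Lemma bd_subcomplex (U : {set {set V}}) c :
  faces U k \subset faces D k -> faces U k.-1 = faces D k.-1 ->
  supp_on (faces U k) c -> bd U k c = bd D k c.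
Proof.
move=> sUD eUD sc; apply/ffunP => t; rewrite !ffunE eUD; case: ifP => // _.
rewrite [LHS]big_mkcond [RHS]big_mkcond /=; apply: eq_bigr => s _.
case: ifP => sU; first by rewrite (subsetP sUD).
by rewrite sc ?sU // mulr0; case: ifP.
Qed.

End ChainMaps.

Lemma lap0 (V : finType) (D : {set {set V}}) k : lap D k (0 : chain int V) = 0.
Proof. by rewrite /lap -(subrr 0) cobdB subrr bdB subrr. Qed.

(* An integer matrix whose row space is saturated (a x M = a v with a <> 0
   forces v into the row space) has a generalized inverse N, M N M = M:
   in Smith normal form all nonzero invariant factors must be units. *)
Lemma saturated_generalized_inverse n (M : 'M[int]_n) :
  (forall (x : 'rV_n) (a : int) (v : 'rV_n), a != 0 -> x *m M = a *: v ->
     exists x' : 'rV_n, x' *m M = v) ->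
  exists N : 'M[int]_n, M *m N *m M = M.
Proof.
move=> sat.
have [L uL [R uR [d _ dM]]] := int_Smith_normal_form M.
pose r := \row_(i < n) d`_i.
have diagE : \matrix_(i, j) (d`_i *+ (i == j :> nat)) = diag_mx r.
  by apply/matrixP => i j; rewrite !mxE.
rewrite diagE in dM.
set Dg := diag_mx r in dM.
have unit_factor p : r 0 p * r 0 p * r 0 p = r 0 p.
  have [->|nz] := eqVneq (r 0 p) 0; first by rewrite !mulr0.
  pose x := (delta_mx 0 p : 'rV[int]_n) *m invmx L.
  have xM : x *m M = r 0 p *: ((delta_mx 0 p : 'rV[int]_n) *m R).
    rewrite dM /x !mulmxA mulmxKV // -rowE scalemxAl; congr (_ *m _).
    apply/matrixP => a b; rewrite !mxE (ord1 a) eqxx /=.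
    by case: (eqVneq p b) => [->|_]; rewrite ?mulr1 ?mulr0.
  have [x' x'M] := sat x _ _ nz xM.
  have E : x' *m L *m Dg = (delta_mx 0 p : 'rV[int]_n).
    by apply: (can_inj (mulmxK uR)); rewrite -x'M dM !mulmxA.
  have : (x' *m L *m Dg) 0 p = 1 by rewrite E !mxE !eqxx.
  rewrite mxE (bigD1 p) //= big1 ?addr0; last first.
    by move=> a ne; rewrite !mxE (negbTE ne) mulr0.
  rewrite !mxE eqxx mulr1n => /intUnitRing.unitzPl.
  by rewrite qualifE => /orP[] /eqP ->; rewrite ?mulr1 ?mulrN1 ?opprK.
exists (invmx R *m Dg^T *m invmx L).
have DDD : Dg *m Dg *m Dg = Dg.
  rewrite /Dg !mulmx_diag; congr diag_mx; apply/matrixP => a b.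
  by have := unit_factor b; rewrite !mxE.
rewrite tr_diag_mx dM !mulmxA (mulmxK uR) (mulmxKV uL).
by rewrite -[in RHS]DDD !mulmxA.
Qed.

(* The coboundary of a complex U onto its j-chains is surjective as soon as
   the boundary of j-chains is injective and H~_{j-1}(U;Z) = 0.  Chains
   are encoded as row vectors indexed by all subsets of V. *)
Section CoboundaryOnto.
Variables (V : finType) (U : {set {set V}}) (j : nat).
Hypothesis cU : is_complex U.
Hypothesis injU : forall c : chain int V, supp_on (faces U j.+1) c ->
  bd U j.+1 c = 0 -> c = 0.
Hypothesis acU : acyc int U j.
Local Notation n := #|{set V}|.

Definition bd_mx : 'M[int]_n := \matrix_(p, q)
  (if (enum_val p \in faces U j.+1) && (enum_val q \in faces U j)
   then bcoef (enum_val p) (enum_val q) else 0).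

Definition chain_of (x : 'rV[int]_n) : chain int V :=
  [ffun s => if s \in faces U j.+1 then x 0 (enum_rank s) else 0].

Lemma sum_enum_rank (F : 'I_n -> int) :
  \sum_p F p = \sum_(s : {set V}) F (enum_rank s).
Proof.
rewrite (reindex (@enum_rank _)) //.
by exists (@enum_val _ _) => s _; [exact: enum_rankK | exact: enum_valK].
Qed.

Lemma bd_mxE x t : (x *m bd_mx) 0 (enum_rank t) = bd U j.+1 (chain_of x) t.
Proof.
rewrite mxE sum_enum_rank ffunE /=.
under eq_bigr => s _ do rewrite mxE !enum_rankK.
case: ifP => tU; last by rewrite big1 // => s _; rewrite andbF mulr0.
rewrite [RHS]big_mkcond /=; apply: eq_bigr => s _; rewrite andbT ffunE.
by case: ifP; rewrite ?mulr0 // intz mulrC.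
Qed.

Lemma bd_mx_inj (x : 'rV[int]_n) :
  (forall p, enum_val p \notin faces U j.+1 -> x 0 p = 0) ->
  x *m bd_mx = 0 -> x = 0.
Proof.
move=> sx xM.
have c0 : chain_of x = 0.
  apply: injU; first by move=> s sn; rewrite ffunE (negbTE sn).
  by apply/ffunP => t; rewrite -bd_mxE xM !mxE ffunE.
apply/matrixP => a p; rewrite (ord1 a) mxE.
have [pU|] := boolP (enum_val p \in faces U j.+1); last exact: sx.
by have := congr1 (fun f : chain int V => f (enum_val p)) c0;
   rewrite !ffunE pU enum_valK.
Qed.

(* The image of the boundary map is saturated: if a w = d c with a <> 0
   then w is a cycle (a d w = d d c = 0), hence a boundary. *)
Lemma bd_mx_saturated (x : 'rV[int]_n) (a : int) (v : 'rV[int]_n) : a != 0 ->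
  x *m bd_mx = a *: v -> exists x' : 'rV_n, x' *m bd_mx = v.
Proof.
move=> nz xM.
pose w : chain int V := [ffun t => v 0 (enum_rank t)].
have Hw t : a * w t = bd U j.+1 (chain_of x) t by rewrite -bd_mxE xM !mxE ffunE.
have sw : supp_on (faces U j) w.
  move=> t tn; move/eqP: (Hw t); rewrite [bd _ _ _ _]ffunE /= (negbTE tn).
  by rewrite mulf_eq0 (negbTE nz) => /eqP.
have bw : bd U j w = 0.
  apply/ffunP => t; have := congr1 (fun f : chain int V => f t) (bdK j (chain_of x) cU).
  rewrite [in RHS]ffunE /= => bb.
  have /eqP : a * bd U j w t = 0.
    rewrite -bb !ffunE; case: ifP => _; rewrite ?mulr0 // big_distrr /=.
    by apply: eq_bigr => u _; rewrite mulrCA Hw.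
  by rewrite mulf_eq0 (negbTE nz) => /eqP ->; rewrite ffunE.
have [b sb bb] := acU sw bw.
exists (\row_p b (enum_val p)).
apply/matrixP => z q; rewrite (ord1 z) -(enum_valK q) bd_mxE.
have -> : chain_of (\row_p b (enum_val p)) = b.
  apply/ffunP => s; rewrite !ffunE mxE enum_rankK.
  by case: ifP => // sn; rewrite sb // sn.
by rewrite bb ffunE enum_valK.
Qed.

Lemma bd_mx_right_inverse : exists N : 'M[int]_n,
  forall s e, s \in faces U j.+1 -> e \in faces U j.+1 ->
    (bd_mx *m N) (enum_rank s) (enum_rank e) = (s == e)%:R.
Proof.
have [N MNM] := saturated_generalized_inverse bd_mx_saturated.
exists N => s e sU eU.
pose y : 'rV[int]_n := delta_mx 0 (enum_rank s) *m bd_mx *m N.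
pose z : 'rV[int]_n := \row_p (if enum_val p \in faces U j.+1 then y 0 p else 0).
have zM : z *m bd_mx = y *m bd_mx.
  apply/matrixP => a q; rewrite !mxE; apply: eq_bigr => p _; rewrite !mxE.
  by rewrite (ord1 a); case: ifP; rewrite /= ?mulr0.
have ez : z = (delta_mx 0 (enum_rank s) : 'rV[int]_n).
  apply/eqP; rewrite -subr_eq0; apply/eqP; apply: bd_mx_inj.
    move=> p pn; rewrite !mxE (negbTE pn).
    have [E|_] := eqVneq p (enum_rank s); first by rewrite E enum_rankK sU in pn.
    by rewrite andbF subr0.
  by rewrite mulmxBl zM /y -(mulmxA _ N) -mulmxA (mulmxA bd_mx) MNM subrr.
have : z 0 (enum_rank e) = (s == e)%:R.
  by rewrite ez mxE eqxx (inj_eq enum_rank_inj) eq_sym.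
by rewrite /z mxE enum_rankK eU /y -mulmxA -rowE mxE.
Qed.

Lemma cobd_onto (b : chain int V) : exists a : chain int V,
  forall s, s \in faces U j.+1 -> cobd U j.+1 a s = b s.
Proof.
have [N HN] := bd_mx_right_inverse.
exists [ffun t => \sum_(e in faces U j.+1) N (enum_rank t) (enum_rank e) * b e].
move=> s sU.
have entry e : \sum_(t in faces U j) bcoef s t * N (enum_rank t) (enum_rank e)
    = (bd_mx *m N) (enum_rank s) (enum_rank e).
  rewrite mxE sum_enum_rank [LHS]big_mkcond /=; apply: eq_bigr => t _.
  by rewrite mxE !enum_rankK sU /=; case: ifP; rewrite ?mul0r.
rewrite ffunE /= sU.
under eq_bigr => t _ do rewrite ffunE intz big_distrr /=.
rewrite exchange_big /=.
under eq_bigr => e eU.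
  under eq_bigr => t _ do rewrite mulrA.
  rewrite -big_distrl /= entry (HN s e sU eU).
  over.
rewrite (bigD1 s) //= eqxx mul1r big1 ?addr0 // => e /andP[_ ne].
by rewrite eq_sym (negbTE ne) mul0r.
Qed.

End CoboundaryOnto.

Section Skeleta.
Variable V : finType.
Implicit Types (D U : {set {set V}}).

Lemma faces_subset U D k : U \subset D -> faces U k \subset faces D k.
Proof.
by move=> sUD; apply/subsetP => s; rewrite !inE => /andP[/(subsetP sUD) -> ->].
Qed.

Lemma faces_skel D k j : (j <= k)%N -> faces (skel D k) j = faces D j.
Proof.
move=> jk; apply/setP => s; rewrite !inE.
by case: eqP => [->|]; rewrite ?andbF // jk andbT.
Qed.

Lemma faces_skel_top D k : faces (skel D k) k.+1 = set0.
Proof.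
by apply/setP => s; rewrite !inE; case: eqP => [->|]; rewrite ?andbF // ltnn andbF.
Qed.

Lemma faces_eq_of_skel U D k j : skel U k = skel D k -> (j <= k)%N ->
  faces U j = faces D j.
Proof. by move=> eUD jk; rewrite -(faces_skel U jk) eUD faces_skel. Qed.

Lemma acyc_top_injective U k (c : chain int V) :
  acyc int U k -> faces U k.+1 = set0 ->
  supp_on (faces U k) c -> bd U k c = 0 -> c = 0.
Proof.
move=> acU top sc bc; have [b sb <-] := acU c sc bc.
have -> : b = 0 by apply/ffunP => s; rewrite ffunE sb // top inE.
exact: bd0.
Qed.

End Skeleta.

Section CycleExtension.
Variables (V : finType) (Delta Ups : {set {set V}}) (i : nat).
Hypothesis cD : is_complex Delta.
Hypothesis cU : is_complex Ups.
Hypothesis facesU_sub : faces Ups i.+1 \subset faces Delta i.+1.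
Hypothesis facesU_eq : forall j, (j <= i)%N -> faces Ups j = faces Delta j.
Hypothesis injU : forall c : chain int V, supp_on (faces Ups i.+1) c ->
  bd Ups i.+1 c = 0 -> c = 0.
Hypothesis acU : acyc int Ups i.
Local Notation Theta := (faces Delta i.+1 :\: faces Ups i.+1).
Implicit Types (b c w x y z : chain int V).

Lemma notin_Ups s : s \in Theta -> s \notin faces Ups i.+1.
Proof. by rewrite inE => /andP[]. Qed.

Lemma Theta_supp c : supp_on Theta c -> supp_on (faces Delta i.+1) c.
Proof. by move=> sc s sn; rewrite sc // inE (negbTE sn) andbF. Qed.

Lemma bd_Ups c : supp_on (faces Ups i.+1) c -> bd Ups i.+1 c = bd Delta i.+1 c.
Proof. by apply: bd_subcomplex; rewrite //= facesU_eq. Qed.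

Lemma boundary_lift y : exists2 w,
  supp_on (faces Ups i.+1) w & bd Delta i.+1 w = bd Delta i.+1 y.
Proof.
have sy : supp_on (faces Ups i) (bd Delta i.+1 y).
  by rewrite facesU_eq //; apply: (bd_supp (k := i.+1)).
have cy : bd Ups i (bd Delta i.+1 y) = 0.
  rewrite (bd_subcomplex (D := Delta)) ?bdK // ?facesU_eq // ?leq_pred //.
have [w sw bw] := acU sy cy.
by exists w; rewrite // -bd_Ups.
Qed.

Definition cycle_ext y z : bool :=
  [&& [forall s, (s \in faces Delta i.+1) || (z s == 0)],
      bd Delta i.+1 z == 0 & [forall s in Theta, z s == y s]].

Lemma cycle_extP y z : reflect
  [/\ supp_on (faces Delta i.+1) z, bd Delta i.+1 z = 0 &
      {in Theta, forall s, z s = y s}]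
  (cycle_ext y z).
Proof.
apply: (iffP and3P) => [[/forallP sz /eqP bz /forall_inP tz]|[sz bz tz]].
  split=> // [s sn|s /tz/eqP //].
  by have := sz s; rewrite (negbTE sn) => /eqP.
split; last by apply/forall_inP => s /tz ->.
  by apply/forallP => s; case: (boolP (s \in _)) => //= sn; rewrite sz.
by apply/eqP.
Qed.

(* Existence: restrict y to Theta and correct its boundary on Ups. *)
Lemma cycle_ext_exists y : exists z, cycle_ext y z.
Proof.
pose yT := restr Theta y.
have [w sw bw] := boundary_lift yT.
exists (yT - w); apply/cycle_extP; split.
- move=> s sn; rewrite !ffunE sw; last by apply: contra sn; apply: subsetP.
  by rewrite inE (negbTE sn) andbF subr0.
- by rewrite bdB bw subrr.
- by move=> s sT; rewrite !ffunE sT sw ?subr0 // notin_Ups.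
Qed.

(* Uniqueness: two extensions differ by a cycle supported on Ups. *)
Lemma cycle_ext_unique y z1 z2 : cycle_ext y z1 -> cycle_ext y z2 -> z1 = z2.
Proof.
move=> /cycle_extP[s1 b1 t1] /cycle_extP[s2 b2 t2].
have sUps : supp_on (faces Ups i.+1) (z1 - z2).
  move=> s sn; rewrite chainB.
  have [sD|sD] := boolP (s \in faces Delta i.+1); last by rewrite s1 ?s2 ?subrr.
  by rewrite t1 ?t2 ?subrr // inE sn.
apply/eqP; rewrite -subr_eq0; apply/eqP; apply: injU => //.
by rewrite bd_Ups // bdB b1 b2 subrr.
Qed.

Definition ext y : chain int V := xchoose (cycle_ext_exists y).

Lemma extP y : cycle_ext y (ext y).
Proof. exact: xchooseP. Qed.

Lemma ext_eq y z : cycle_ext y z -> ext y = z.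
Proof. exact: cycle_ext_unique (extP y). Qed.

(* By uniqueness the extension map is additive. *)
Lemma extB x y : ext (x - y) = ext x - ext y.
Proof.
apply: ext_eq; move/cycle_extP: (extP x) => [sx bx tx].
move/cycle_extP: (extP y) => [sy b_y ty].
apply/cycle_extP; split.
- by move=> s sn; rewrite !ffunE sx ?sy ?subrr.
- by rewrite bdB bx b_y subrr.
- by move=> s sT; rewrite !ffunE tx ?ty.
Qed.

(* The Laplacian image of an i-chain is an i-cycle, hence its own
   extension from Theta. *)
Lemma ext_lap b : ext (restr Theta (lap Delta i.+1 b)) = lap Delta i.+1 b.
Proof.
apply: ext_eq; apply/cycle_extP; split.
- exact: (bd_supp (k := i.+2)).
- exact: bdK.
- by move=> s sT; rewrite [restr _ _ _]ffunE sT.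
Qed.

(* Any Laplacian image is the Laplacian of a chain on Theta: subtract from
   b a coboundary agreeing with b on Ups, which is possible because the
   coboundary of Ups is onto; coboundaries are killed by the Laplacian. *)
Lemma lap_Theta b : supp_on (faces Delta i.+1) b ->
  exists2 b', supp_on Theta b' & lap Delta i.+1 b' = lap Delta i.+1 b.
Proof.
move=> sb; have [a Ha] := cobd_onto cU injU acU b.
have cobd_Ups s : s \in faces Ups i.+1 -> cobd Delta i.+1 a s = b s.
  by move=> sU; rewrite -Ha // !ffunE sU (subsetP facesU_sub _ sU) /= facesU_eq.
exists (b - cobd Delta i.+1 a).
  move=> s sn; rewrite chainB.
  have [sU|sU] := boolP (s \in faces Ups i.+1); first by rewrite cobd_Ups ?subrr.
  have sD : s \notin faces Delta i.+1 by move: sn; rewrite inE sU.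
  by rewrite sb // cobd_supp // subrr.
by rewrite /lap cobdB cobdK // subr0.
Qed.

Lemma cycle_ext_quot_iso :
  quot_iso
    (fun c : chain int V => supp_on (faces Delta i.+1) c /\ bd Delta i.+1 c = 0)
    (fun c : chain int V => exists2 b : chain int V,
        supp_on (faces Delta i.+1) b & c = lap Delta i.+1 b)
    (fun c : chain int V => supp_on Theta c)
    (fun c : chain int V => exists2 b : chain int V,
        supp_on Theta b & c = restr Theta (lap Delta i.+1 b)).
Proof.
exists ext; split=> [x y _ _|y _|y Cy|x [sx bx]].
- exact: extB.
- by have /cycle_extP[] := extP y.
- split=> [[b sb E]|[b sb ->]]; last by exists b; [exact: Theta_supp | exact: ext_lap].
  have [b' sb' lb'] := lap_Theta sb.
  exists b' => //; apply/ffunP => s; rewrite ffunE lb' -E.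
  case: ifP => sT; last by rewrite Cy ?sT.
  by have /cycle_extP[_ _ ->] := extP y.
- exists (restr Theta x); first by move=> s sn; rewrite ffunE (negbTE sn).
  rewrite (ext_eq (z := x)); last first.
    by apply/cycle_extP; split=> // s sT; rewrite ffunE sT.
  by exists 0; rewrite ?subrr ?lap0 // => s _; rewrite ffunE.
Qed.

End CycleExtension.

Theorem mainTheorem1 (V : finType) (Delta : {set {set V}}) (d i : nat)
  (Ups : {set {set V}}) :
  is_complex Delta ->
  pure Delta d ->
  (forall k, (k <= d)%N -> acyc rat Delta k) ->     (* APC *)
  (i < d)%N ->
  spanning_tree (skel Delta i.+1) Ups i.+1 ->
  acyc int Ups i ->                                 (* H~_{i-1}(Ups;Z) = 0 *)
  let Theta := faces Delta i.+1 :\: faces Ups i.+1 in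
  quot_iso
    (fun c : chain int V => supp_on (faces Delta i.+1) c /\ bd Delta i.+1 c = 0)
    (fun c : chain int V => exists2 b : chain int V,
        supp_on (faces Delta i.+1) b & c = lap Delta i.+1 b)
    (fun c : chain int V => supp_on Theta c)
    (fun c : chain int V => exists2 b : chain int V,
        supp_on Theta b & c = restr Theta (lap Delta i.+1 b)).
Proof.
move=> cD _ _ _ [[cU sUD] skelUD acUtop _ _] acU Theta.
have sub_faces k : faces Ups k \subset faces (skel Delta i.+1) k.
  exact: faces_subset.
have facesU_sub : faces Ups i.+1 \subset faces Delta i.+1.
  by rewrite -(faces_skel Delta (leqnn i.+1)).
have facesU_eq j : (j <= i)%N -> faces Ups j = faces Delta j.
  move=> ji; rewrite (faces_eq_of_skel skelUD ji) faces_skel //.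
  exact: leqW.
have topU : faces Ups i.+2 = set0.
  by apply/eqP; rewrite -subset0 -(faces_skel_top Delta i.+1) sub_faces.
have injU c := @acyc_top_injective _ Ups i.+1 c acUtop topU.
exact: cycle_ext_quot_iso.
Qed.
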